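(* Suppose that for every agent $i$ and every date $n$, the period utility $u_{in}$ is twice continuously differentiable on $\mathbb R_{++}$, satisfies $u_{in}'(x)>0$ and $u_{in}''(x)<0$ for every $x>0$, and satisfies $\lim_{x\to 0}u_{in}'(x)=+\infty$. Let $(\bar p,\bar x)$ be a competitive equilibrium of $\mathcal E^{N,\beta}$. Then for each agent $i\in I_N$ and each $m,n=1,\dots,N$, $$\frac{d\xi_{in}}{dp_m}(\bar p)=S_i(m,n)+M_i(m,n),$$ where $$S_i(m,n):=\frac{\bar r_{im}\bar r_{in}}{\bar r_i}-\frac{\bar r_{in}}{\bar p_n}\mathbf 1_{\{m=n\}},\qquad M_i(m,n):=\frac{\bar r_{in}}{\bar r_i}(\omega_{im}-\bar x_{im}).$$ Here $\bar r_{in}:=\frac{u_{in}'(\bar x_{in})}{-u_{in}''(\bar x_{in})}$ and $\bar r_i:=\bar r_{i0}+\sum_{n=1}^N\bar p_n\bar r_{in}$.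
   Context: $\mathcal E^{N,\beta}$ is a finite exchange economy with agents $I_N$ and dated commodities $0,1,\dots,N$. Agent $i$ has utility $U_i(x_i)=\sum_{n=0}^N\beta^n u_{in}(x_{in})$, $\beta\in(0,1)$, and endowment $\omega_i\in\mathbb R_+^{N+1}$. The price of commodity $0$ is one and $p=(p_1,\dots,p_N)$ are future prices; agent $i$ maximizes $U_i$ subject to $x_{i0}+\sum_{n=1}^N p_nx_{in}\le\omega_{i0}+\sum_{n=1}^N p_n\omega_{in}$, with Marshallian demand $\xi_i(p)$ (wealth evaluated at the endowment, so $d/dp_m$ is the total derivative including the endowment-wealth effect). A competitive equilibrium $(\bar p,\bar x)$ satisfies market clearing for future goods and $\bar x_i=\xi_i(\bar p)$. *)

From Stdlib Require Import Reals Lra.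
From Coquelicot Require Import Coquelicot.
Open Scope R_scope.

(* A bundle x for economy E^{N,beta} uses the coordinates 0..N;
   a price system p uses the coordinates 1..N (p 0 is ignored: the
   price of commodity 0 is normalized to one).
   Agents are indexed by i < nI (the finite set I_N).
   u i n : R -> R is the period utility u_{in}. *)

Definition sum1N (N : nat) (f : nat -> R) : R := sum_n_m f 1 N.

Definition Util (N : nat) (beta : R) (u : nat -> R -> R) (x : nat -> R) : R :=
  sum_n_m (fun n => beta ^ n * u n (x n)) 0 N.

Definition pos_prices (N : nat) (p : nat -> R) : Prop :=
  forall n, (1 <= n <= N)%nat -> 0 < p n.

Definition pos_bundle (N : nat) (x : nat -> R) : Prop :=
  forall n, (n <= N)%nat -> 0 < x n.

Definition budget (N : nat) (p w x : nat -> R) : Prop :=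
  x 0%nat + sum1N N (fun n => p n * x n) <= w 0%nat + sum1N N (fun n => p n * w n).

Definition is_demand (N : nat) (beta : R) (u : nat -> R -> R) (w : nat -> R)
    (xi : (nat -> R) -> (nat -> R)) : Prop :=
  forall p, pos_prices N p ->
    pos_bundle N (xi p) /\ budget N p w (xi p) /\
    forall y, pos_bundle N y -> budget N p w y ->
      Util N beta u y <= Util N beta u (xi p).

Definition competitive_equilibrium (N nI : nat)
    (omega : nat -> nat -> R) (xi : nat -> (nat -> R) -> (nat -> R))
    (pbar : nat -> R) (xbar : nat -> nat -> R) : Prop :=
  pos_prices N pbar /\
  (forall i, (i < nI)%nat -> forall n, (n <= N)%nat -> xbar i n = xi i pbar n) /\
  (forall n, (1 <= n <= N)%nat ->
     sum_n_m (fun i => xbar i n) 0 (nI - 1) = sum_n_m (fun i => omega i n) 0 (nI - 1)).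

Definition upd_price (p : nat -> R) (m : nat) (t : R) : nat -> R :=
  fun k => if Nat.eqb k m then t else p k.

Definition good_period_utility (v : R -> R) : Prop :=
  (forall x, 0 < x ->
     ex_derive v x /\ ex_derive (Derive v) x /\
     continuous (Derive_n v 2) x /\
     0 < Derive v x /\ Derive_n v 2 x < 0) /\
  filterlim (Derive v) (at_right 0) (Rbar_locally p_infty).

Definition rr (v : R -> R) (x : R) : R := Derive v x / (- Derive_n v 2 x).

From Stdlib Require Import Reals Lra Lia FunctionalExtensionality.
From Coquelicot Require Import Coquelicot.
Open Scope R_scope.

(* Fix the agent and move only the price of good m along t |-> upd_price p m t,
   with demands X_k(t).  Along this path the first-order conditions
   beta^k u_k'(X_k t) = p_k(t) lam(t), lam(t) = u_0'(X_0 t), and the budget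
   identity hold.  Writing u_k'(X_k t) - u_k'(x_k) as the difference-quotient
   slope of u_k' between x_k and X_k t times (X_k t - x_k) turns them into an
   exact linear system in the demand changes; solving it gives
   X_n t - x_n = G(t) (t - p_m) with G continuous at p_m, which is Caratheodory's
   form of differentiability.  Continuity of G needs continuity of demand, which
   comes from monotonicity of marginal utility: if X_0 rises then lam falls, every
   X_k with k <> m rises, and the budget bounds the rise of X_0 by the fall of
   X_m, which the first-order condition for good m keeps small.  At t = p_m the
   slopes are the u_k'', and G(p_m) is the stated formula.
   Interiority of demand is part of [is_demand]. *)

Lemma sum_n_m_lin (c d : R) (f g : nat -> R) (a b : nat) :
  sum_n_m (fun k => c * f k + d * g k) a b = c * sum_n_m f a b + d * sum_n_m g a b :> R.
Proof.
  assert (Hplus : sum_n_m (fun k => c * f k + d * g k) a b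
                  = sum_n_m (fun k => c * f k) a b + sum_n_m (fun k => d * g k) a b :> R)
    by exact (sum_n_m_plus _ _ a b).
  assert (Hf : sum_n_m (fun k => c * f k) a b = c * sum_n_m f a b :> R)
    by exact (sum_n_m_mult_l c f a b).
  assert (Hg : sum_n_m (fun k => d * g k) a b = d * sum_n_m g a b :> R)
    by exact (sum_n_m_mult_l d g a b).
  rewrite Hplus, Hf, Hg. reflexivity.
Qed.

Lemma sum_n_m_minus (f g : nat -> R) (a b : nat) :
  sum_n_m (fun k => f k - g k) a b = sum_n_m f a b - sum_n_m g a b :> R.
Proof.
  rewrite (sum_n_m_ext _ (fun k => 1 * f k + -1 * g k)) by (intros k; simpl; ring).
  rewrite sum_n_m_lin. ring.
Qed.

Lemma sum_n_m_nonneg (f : nat -> R) (a b : nat) :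
  (forall k, (a <= k <= b)%nat -> 0 <= f k) -> 0 <= sum_n_m f a b.
Proof.
  induction b as [|b IH]; intros Hf.
  - destruct a; [rewrite sum_n_n; apply Hf; lia|].
    rewrite sum_n_m_zero by lia. apply Rle_refl.
  - destruct (Nat.le_gt_cases a (S b)) as [Hab|Hab].
    + rewrite sum_n_Sm by exact Hab. apply Rplus_le_le_0_compat.
      * apply IH. intros k Hk. apply Hf. lia.
      * apply Hf. lia.
    + rewrite sum_n_m_zero by lia. apply Rle_refl.
Qed.

Lemma sum_n_m_single (f : nat -> R) (a b j : nat) : (a <= j <= b)%nat ->
  (forall k, (a <= k <= b)%nat -> k <> j -> f k = 0) -> sum_n_m f a b = f j :> R.
Proof.
  intros Hj Hf.
  assert (Hzero : forall c d, (forall k, (c <= k <= d)%nat -> f k = 0) -> sum_n_m f c d = 0 :> R).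
  { intros c d Hcd. rewrite (sum_n_m_ext_loc f (fun _ => zero)) by exact Hcd.
    exact (sum_n_m_const_zero c d). }
  rewrite (sum_n_m_Chasles f a j b) by lia.
  rewrite (Hzero (S j) b) by (intros k Hk; apply Hf; lia).
  destruct j as [|j].
  - replace a with 0%nat by lia. rewrite sum_n_n. unfold plus; simpl; ring.
  - rewrite sum_n_Sm by lia. rewrite (Hzero a j) by (intros k Hk; apply Hf; lia).
    unfold plus; simpl; ring.
Qed.

Lemma sum_n_m_ge_term (f : nat -> R) (a b j : nat) : (a <= j <= b)%nat ->
  (forall k, (a <= k <= b)%nat -> k <> j -> 0 <= f k) -> f j <= sum_n_m f a b.
Proof.
  intros Hj Hf.
  set (g := fun k => if Nat.eqb k j then f j else 0).
  assert (Hg : sum_n_m g a b = f j :> R).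
  { rewrite (sum_n_m_single g a b j Hj); unfold g.
    - now rewrite Nat.eqb_refl.
    - intros k _ Hk. now apply Nat.eqb_neq in Hk as ->. }
  assert (Hfg : 0 <= sum_n_m (fun k => f k - g k) a b).
  { apply sum_n_m_nonneg. intros k Hk. unfold g.
    destruct (Nat.eqb_spec k j) as [->|Hkj]; [lra|]. specialize (Hf k Hk Hkj). lra. }
  rewrite sum_n_m_minus, Hg in Hfg. lra.
Qed.

Lemma continuity_pt_sum_n_m (f : nat -> R -> R) (a b : nat) (x : R) :
  (forall k, (a <= k <= b)%nat -> continuity_pt (f k) x) ->
  continuity_pt (fun t => sum_n_m (fun k => f k t) a b) x.
Proof.
  induction b as [|b IH]; intros Hf.
  - destruct a.
    + apply (continuity_pt_ext (f 0%nat)); [intros t; now rewrite sum_n_n|].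
      apply Hf. lia.
    + apply (continuity_pt_ext (fun _ => 0)); [intros t; now rewrite sum_n_m_zero by lia|].
      apply continuity_pt_const. intros ? ?; reflexivity.
  - destruct (Nat.le_gt_cases a (S b)) as [Hab|Hab].
    + apply (continuity_pt_ext (fun t => sum_n_m (fun k => f k t) a b + f (S b) t)).
      { intros t. now rewrite sum_n_Sm. }
      apply continuity_pt_plus; [apply IH; intros k Hk|]; apply Hf; lia.
    + apply (continuity_pt_ext (fun _ => 0)); [intros t; now rewrite sum_n_m_zero by lia|].
      apply continuity_pt_const. intros ? ?; reflexivity.
Qed.

Definition slope (f : R -> R) (x l y : R) : R :=
  if Req_EM_T y x then l else (f y - f x) / (y - x).

Lemma slope_at (f : R -> R) (x l : R) : slope f x l x = l.
Proof. unfold slope. now destruct (Req_EM_T x x). Qed.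

Lemma slope_spec (f : R -> R) (x l y : R) : f y - f x = slope f x l y * (y - x).
Proof.
  unfold slope. destruct (Req_EM_T y x) as [->|Hyx]; [ring|].
  field. lra.
Qed.

Lemma continuity_pt_slope (f : R -> R) (x l : R) :
  is_derive f x l -> continuity_pt (slope f x l) x.
Proof.
  intros Hf. apply continuity_pt_locally. intros eps.
  destruct (proj1 (is_derive_Reals f x l) Hf eps (cond_pos eps)) as [d Hd].
  exists d. intros y Hy. rewrite slope_at. unfold slope.
  destruct (Req_EM_T y x) as [->|Hyx]; [rewrite Rminus_diag, Rabs_R0; apply cond_pos|].
  replace y with (x + (y - x)) at 1 by ring. apply Hd; [lra|exact Hy].
Qed.

Lemma is_derive_of_slope (f g : R -> R) (x : R) :
  locally x (fun y => f y - f x = g y * (y - x)) -> continuity_pt g x ->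
  is_derive f x (g x).
Proof.
  intros [d1 Hd1] Hg. apply is_derive_Reals. intros eps Heps.
  destruct (proj1 (continuity_pt_locally g x) Hg (mkposreal eps Heps)) as [d2 Hd2].
  assert (Hd : 0 < Rmin d1 d2) by (apply Rmin_pos; apply cond_pos).
  exists (mkposreal _ Hd). simpl. intros h Hh0 Hh.
  assert (Hball : forall d : posreal, Rmin d1 d2 <= d -> ball x d (x + h)).
  { intros d Hle. change (Rabs (x + h - x) < d). replace (x + h - x) with h by ring. lra. }
  rewrite (Hd1 (x + h)) by (apply Hball, Rmin_l).
  replace (g (x + h) * (x + h - x) / h) with (g (x + h)) by (field; exact Hh0).
  apply (Hd2 (x + h)), Hball, Rmin_r.
Qed.

Lemma locally_Rabs_lin (t0 c eps : R) : 0 < eps -> locally t0 (fun t => Rabs ((t - t0) * c) < eps).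
Proof.
  intros Heps.
  assert (Hc : continuity_pt (fun t => (t - t0) * c) t0).
  { apply continuity_pt_mult; [apply continuity_pt_minus|]; try apply continuity_pt_id;
      apply continuity_pt_const; intros ? ?; reflexivity. }
  refine (filter_imp _ _ _ (proj1 (continuity_pt_locally _ t0) Hc (mkposreal eps Heps))).
  intros t. simpl. now rewrite Rminus_diag, Rmult_0_l, Rminus_0_r.
Qed.

Section DecreasingOnPositives.
Variable f : R -> R.
Hypothesis f_decr : forall a b, 0 < a < b -> f b < f a.

Lemma decreasing_le a b : 0 < a <= b -> f b <= f a.
Proof.
  intros Hab. destruct (Req_dec a b) as [->|Hne]; [lra|].
  left. apply f_decr. lra.
Qed.

Lemma slope_neg_of_decreasing x l y : l < 0 -> 0 < x -> 0 < y -> slope f x l y < 0.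
Proof.
  intros Hl Hx Hy. unfold slope. destruct (Req_EM_T y x) as [_|Hyx]; [exact Hl|].
  destruct (Rlt_or_le y x) as [Hlt|Hle].
  - apply Rdiv_pos_neg; [pose proof (f_decr y x)|]; lra.
  - apply Rdiv_neg_pos; [pose proof (f_decr x y)|]; lra.
Qed.

Lemma decreasing_inverse_bounds x e : 0 < x -> 0 < e -> exists eta, 0 < eta /\
  (forall y, 0 < y -> f y < f x + eta -> x - e < y) /\
  (forall y, 0 < y -> f x - eta < f y -> y < x + e).
Proof.
  intros Hx He. set (e' := Rmin e (x / 2)).
  assert (He' : 0 < e' <= e /\ e' <= x / 2)
    by (unfold e'; split; [split; [apply Rmin_pos|apply Rmin_l]|apply Rmin_r]; lra).
  pose proof (f_decr (x - e') x ltac:(lra)). pose proof (f_decr x (x + e) ltac:(lra)).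
  exists (Rmin (f (x - e') - f x) (f x - f (x + e))).
  pose proof (Rmin_l (f (x - e') - f x) (f x - f (x + e))).
  pose proof (Rmin_r (f (x - e') - f x) (f x - f (x + e))).
  split; [apply Rmin_pos; lra|split; intros y Hy Hfy].
  - destruct (Rlt_or_le (x - e) y) as [ok|Hle]; [exact ok|].
    pose proof (decreasing_le y (x - e') ltac:(lra)). lra.
  - destruct (Rlt_or_le y (x + e)) as [ok|Hle]; [exact ok|].
    pose proof (decreasing_le (x + e) y ltac:(lra)). lra.
Qed.

Lemma continuity_pt_of_decreasing_comp (X : R -> R) (t0 : R) :
  0 < X t0 -> locally t0 (fun t => 0 < X t) ->
  continuity_pt (fun t => f (X t)) t0 -> continuity_pt X t0.
Proof.
  intros Hx0 HX Hc. apply continuity_pt_locally. intros e.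
  destruct (decreasing_inverse_bounds (X t0) e Hx0 (cond_pos e))
    as [eta [Heta [Hlo Hhi]]].
  pose proof (proj1 (continuity_pt_locally _ t0) Hc (mkposreal eta Heta)) as Hnear.
  refine (filter_imp _ _ _ (filter_and _ _ HX Hnear)).
  intros t [Ht Hft]. simpl in Hft. apply Rabs_def2 in Hft as [Hft1 Hft2].
  specialize (Hlo (X t) Ht ltac:(lra)). specialize (Hhi (X t) Ht ltac:(lra)).
  apply Rabs_def1; lra.
Qed.
End DecreasingOnPositives.

Section GoodPeriodUtility.
Variable v : R -> R.
Hypothesis Hv : good_period_utility v.

Lemma good_utility_Derive_pos x : 0 < x -> 0 < Derive v x.
Proof. intros Hx. apply (proj1 Hv x Hx). Qed.

Lemma good_utility_Derive_n2_neg x : 0 < x -> Derive_n v 2 x < 0.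
Proof. intros Hx. apply (proj1 Hv x Hx). Qed.

Lemma good_utility_is_derive x : 0 < x -> is_derive v x (Derive v x).
Proof. intros Hx. apply Derive_correct, (proj1 Hv x Hx). Qed.

Lemma good_utility_is_derive_Derive x : 0 < x -> is_derive (Derive v) x (Derive_n v 2 x).
Proof. intros Hx. apply Derive_correct, (proj1 Hv x Hx). Qed.

Lemma good_utility_increasing a b : 0 < a < b -> v a < v b.
Proof.
  intros Hab. apply (incr_function v 0 p_infty (Derive v)); simpl; try lra.
  - intros x Hx _. now apply good_utility_is_derive.
  - intros x Hx _. now apply good_utility_Derive_pos.
Qed.

Lemma good_utility_Derive_decreasing a b : 0 < a < b -> Derive v b < Derive v a.
Proof.
  intros Hab. apply Ropp_lt_cancel.
  apply (incr_function (fun x => - Derive v x) 0 p_infty (fun x => - Derive_n v 2 x));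
    try (simpl; lra).
  - intros x Hx _. apply (is_derive_opp (Derive v)). now apply good_utility_is_derive_Derive.
  - intros x Hx _. pose proof (good_utility_Derive_n2_neg x Hx). lra.
Qed.

Lemma continuity_pt_good_utility_Derive x : 0 < x -> continuity_pt (Derive v) x.
Proof.
  intros Hx. apply continuity_pt_filterlim, (ex_derive_continuous (Derive v)).
  eexists. now apply good_utility_is_derive_Derive.
Qed.

End GoodPeriodUtility.

Lemma upd_price_eq (p : nat -> R) (m : nat) (t : R) : upd_price p m t m = t.
Proof. unfold upd_price. now rewrite Nat.eqb_refl. Qed.

Lemma upd_price_neq (p : nat -> R) (m k : nat) (t : R) : k <> m -> upd_price p m t k = p k.
Proof. intros Hk. unfold upd_price. now apply Nat.eqb_neq in Hk as ->. Qed.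

Lemma upd_price_id (p : nat -> R) (m : nat) : upd_price p m (p m) = p.
Proof.
  apply functional_extensionality. intros k. unfold upd_price.
  now destruct (Nat.eqb_spec k m) as [->|].
Qed.

Lemma upd_price_sub (p : nat -> R) (m k : nat) (t : R) :
  upd_price p m t k - p k = (t - p m) * (if Nat.eqb k m then 1 else 0).
Proof. unfold upd_price. destruct (Nat.eqb_spec k m) as [->|]; ring. Qed.

Lemma sum_n_m_upd_price (g : nat -> R -> R) (x : nat -> R) (a b j : nat) (c : R) :
  (a <= j <= b)%nat ->
  sum_n_m (fun k => g k (upd_price x j c k)) a b
  = sum_n_m (fun k => g k (x k)) a b + (g j c - g j (x j)) :> R.
Proof.
  intros Hj.
  assert (Hdiff : sum_n_m (fun k => g k (upd_price x j c k) - g k (x k)) a b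
                  = g j c - g j (x j) :> R).
  { rewrite (sum_n_m_single _ a b j Hj).
    - now rewrite upd_price_eq.
    - intros k _ Hk. rewrite upd_price_neq by exact Hk. ring. }
  rewrite sum_n_m_minus in Hdiff. lra.
Qed.

Lemma Util_upd_price (N : nat) (beta : R) (u : nat -> R -> R) (x : nat -> R) (j : nat) (c : R) :
  (j <= N)%nat ->
  Util N beta u (upd_price x j c) = Util N beta u x + beta ^ j * (u j c - u j (x j)).
Proof.
  intros Hj. unfold Util.
  rewrite (sum_n_m_upd_price (fun n y => beta ^ n * u n y)) by lia. ring.
Qed.

Lemma sum1N_upd_price_sub (N : nat) (p z : nat -> R) (m : nat) (t : R) : (1 <= m <= N)%nat ->
  sum1N N (fun k => (upd_price p m t k - p k) * z k) = (t - p m) * z m.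
Proof.
  intros Hm. unfold sum1N. rewrite (sum_n_m_single _ 1 N m Hm).
  - now rewrite upd_price_eq.
  - intros k _ Hk. rewrite upd_price_neq by exact Hk. ring.
Qed.

Lemma continuity_pt_upd_price (p : nat -> R) (m k : nat) (t0 : R) :
  continuity_pt (fun t => upd_price p m t k) t0.
Proof.
  unfold upd_price. destruct (Nat.eqb k m).
  - apply continuity_pt_id.
  - apply continuity_pt_const. intros ? ?; reflexivity.
Qed.

Section Consumer.
Variables (N : nat) (beta : R) (u : nat -> R -> R) (w : nat -> R).
Variable xi : (nat -> R) -> nat -> R.
Hypothesis beta_pos : 0 < beta.
Hypothesis u_good : forall n, (n <= N)%nat -> good_period_utility (u n).
Hypothesis xi_demand : is_demand N beta u w xi.

Lemma demand_pos p k : pos_prices N p -> (k <= N)%nat -> 0 < xi p k.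
Proof. intros Hp Hk. now apply (xi_demand p Hp). Qed.

Lemma demand_no_reallocation_gain p k s : pos_prices N p -> (1 <= k <= N)%nat ->
  - xi p k < s -> p k * s < xi p 0%nat ->
  beta ^ k * u k (xi p k + s) + u 0%nat (xi p 0%nat - p k * s)
  <= beta ^ k * u k (xi p k) + u 0%nat (xi p 0%nat).
Proof.
  intros Hp Hk Hs1 Hs2. destruct (xi_demand p Hp) as [Hpos [Hbud Hmax]].
  set (x := xi p) in *.
  (* [upd_price] is plain function update; here it modifies bundles. *)
  set (z := upd_price x k (x k + s)).
  set (y := upd_price z 0 (x 0%nat - p k * s)).
  assert (Hz0 : z 0%nat = x 0%nat) by (apply upd_price_neq; lia).
  assert (Hy : forall n, (1 <= n)%nat -> y n = z n) by (intros n Hn; apply upd_price_neq; lia).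
  assert (Hypos : pos_bundle N y).
  { intros n Hn. destruct (Nat.eq_dec n 0) as [->|Hn0].
    - unfold y. rewrite upd_price_eq. lra.
    - rewrite Hy by lia. destruct (Nat.eq_dec n k) as [->|Hnk].
      + unfold z. rewrite upd_price_eq. lra.
      + unfold z. rewrite upd_price_neq by exact Hnk. now apply Hpos. }
  assert (Hybud : budget N p w y).
  { unfold budget, sum1N in *.
    rewrite (sum_n_m_ext_loc _ (fun n => p n * z n)) by (intros n Hn; now rewrite Hy by lia).
    unfold z. rewrite (sum_n_m_upd_price (fun n c => p n * c)) by lia.
    unfold y. rewrite upd_price_eq. lra. }
  specialize (Hmax y Hypos Hybud).
  unfold y in Hmax. rewrite Util_upd_price, Hz0 in Hmax by lia.
  unfold z in Hmax. rewrite Util_upd_price in Hmax by lia. simpl in Hmax. lra.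
Qed.

Lemma demand_foc p k : pos_prices N p -> (1 <= k <= N)%nat ->
  beta ^ k * Derive (u k) (xi p k) = p k * Derive (u 0%nat) (xi p 0%nat).
Proof.
  intros Hp Hk.
  set (x := xi p).
  assert (Hx0 : 0 < x 0%nat) by (apply demand_pos; [exact Hp|lia]).
  assert (Hxk : 0 < x k) by (apply demand_pos; [exact Hp|lia]).
  assert (Hpk : 0 < p k) by (apply Hp; exact Hk).
  set (psi := fun s => beta ^ k * u k (x k + s) + u 0%nat (x 0%nat - p k * s)).
  set (a := Rmin (x k) (x 0%nat / p k)).
  assert (Ha : 0 < a) by (apply Rmin_pos; [|apply Rdiv_lt_0_compat]; lra).
  assert (Hak : a <= x k) by apply Rmin_l.
  assert (Ha0 : p k * a <= x 0%nat).
  { replace (x 0%nat) with (p k * (x 0%nat / p k)) by (field; lra).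
    apply Rmult_le_compat_l; [lra|apply Rmin_r]. }
  assert (Hpsi_max : forall s, - a < s -> s < a -> psi s <= psi 0).
  { intros s Hs1 Hs2. unfold psi. rewrite Rplus_0_r, Rmult_0_r, Rminus_0_r.
    apply demand_no_reallocation_gain; try assumption.
    - fold x. lra.
    - fold x. nra. }
  assert (Hpsi' : derivable_pt_lim psi 0
                    (beta ^ k * Derive (u k) (x k) - p k * Derive (u 0%nat) (x 0%nat))).
  { apply is_derive_Reals. unfold psi.
    pose proof (good_utility_is_derive _ (u_good k ltac:(lia)) _ Hxk).
    pose proof (good_utility_is_derive _ (u_good 0%nat ltac:(lia)) _ Hx0).
    auto_derive; rewrite Rplus_0_r, Rmult_0_r, Ropp_0, Rplus_0_r.
    - repeat split; eexists; eassumption.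
    - change (fun y => u k y) with (u k). change (fun y => u 0%nat y) with (u 0%nat).
      ring. }
  pose proof (deriv_maximum psi (- a) a 0 (exist _ _ Hpsi') ltac:(lra) ltac:(lra) Hpsi_max)
    as Hcrit.
  simpl in Hcrit. lra.
Qed.

Lemma demand_budget_eq p : pos_prices N p ->
  xi p 0%nat + sum1N N (fun n => p n * xi p n) = w 0%nat + sum1N N (fun n => p n * w n).
Proof.
  intros Hp. destruct (xi_demand p Hp) as [Hpos [Hbud Hmax]].
  set (x := xi p) in *.
  set (slack := w 0%nat + sum1N N (fun n => p n * w n) - (x 0%nat + sum1N N (fun n => p n * x n))).
  destruct (Rle_lt_or_eq_dec _ _ Hbud) as [Hlt|Heq]; [exfalso|exact Heq].
  set (y := upd_price x 0 (x 0%nat + slack)).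
  assert (Hypos : pos_bundle N y).
  { intros n Hn. unfold y, upd_price. destruct (Nat.eqb_spec n 0) as [->|].
    - pose proof (Hpos 0%nat ltac:(lia)). unfold slack. lra.
    - now apply Hpos. }
  assert (Hybud : budget N p w y).
  { unfold budget, sum1N, y.
    rewrite (sum_n_m_ext_loc _ (fun n => p n * x n))
      by (intros n Hn; now rewrite upd_price_neq by lia).
    rewrite upd_price_eq. unfold slack, sum1N. lra. }
  specialize (Hmax y Hypos Hybud). unfold y in Hmax. rewrite Util_upd_price in Hmax by lia.
  pose proof (good_utility_increasing _ (u_good 0%nat ltac:(lia)) (x 0%nat) (x 0%nat + slack)
                ltac:(pose proof (Hpos 0%nat ltac:(lia)); unfold slack; lra)).
  simpl in Hmax. lra.
Qed.

Section PriceChange.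
Variables (p : nat -> R) (m : nat) (x : nat -> R).
Hypothesis p_pos : pos_prices N p.
Hypothesis m_range : (1 <= m <= N)%nat.
Hypothesis x_base : forall k, (k <= N)%nat -> xi p k = x k.

Let P (t : R) : nat -> R := upd_price p m t.
Let X (k : nat) (t : R) : R := xi (P t) k.
Let lam (t : R) : R := Derive (u 0%nat) (X 0%nat t).
Let lam0 : R := Derive (u 0%nat) (x 0%nat).
(* [- / a k t] is [beta ^ k] times the slope of [u_k'] between [x k] and
   [X k t], which makes the first-order conditions linear in the demand changes. *)
Let a (k : nat) (t : R) : R :=
  / (- (beta ^ k * slope (Derive (u k)) (x k) (Derive_n (u k) 2 (x k)) (X k t))).
Let S2 (t : R) : R := sum1N N (fun k => a k t * P t k ^ 2).

Lemma P_pos t : 0 < t -> pos_prices N (P t).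
Proof.
  intros Ht k Hk. unfold P, upd_price.
  destruct (Nat.eqb k m); [exact Ht|now apply p_pos].
Qed.

Lemma X_pos t k : 0 < t -> (k <= N)%nat -> 0 < X k t.
Proof. intros Ht Hk. apply demand_pos; [apply P_pos|]; assumption. Qed.

Lemma x_pos k : (k <= N)%nat -> 0 < x k.
Proof. intros Hk. rewrite <- x_base by exact Hk. apply demand_pos; assumption. Qed.

Lemma X_base k : (k <= N)%nat -> X k (p m) = x k.
Proof. intros Hk. unfold X, P. rewrite upd_price_id. now apply x_base. Qed.

Lemma lam0_pos : 0 < lam0.
Proof. apply good_utility_Derive_pos; [apply u_good; lia|apply x_pos; lia]. Qed.

Lemma locally_pos_price : locally (p m) (fun t => 0 < t).
Proof.
  apply (locally_interval _ _ 0 p_infty); simpl; [apply p_pos; lia|exact I|].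
  now intros t Ht _.
Qed.

Lemma a_pos t k : 0 < t -> (k <= N)%nat -> 0 < a k t.
Proof.
  intros Ht Hk. apply Rinv_0_lt_compat, Ropp_0_gt_lt_contravar, Rmult_pos_neg.
  - apply pow_lt. exact beta_pos.
  - apply slope_neg_of_decreasing.
    + apply good_utility_Derive_decreasing, u_good, Hk.
    + apply good_utility_Derive_n2_neg; [apply u_good, Hk|apply x_pos, Hk].
    + apply x_pos, Hk.
    + apply X_pos; assumption.
Qed.

Lemma X_change t k : 0 < t -> (k <= N)%nat ->
  X k t - x k = - a k t * (beta ^ k * (Derive (u k) (X k t) - Derive (u k) (x k))).
Proof.
  intros Ht Hk. pose proof (a_pos t k Ht Hk) as Ha.
  unfold a in *. set (D := slope _ _ _ (X k t)) in *.
  rewrite (slope_spec (Derive (u k)) (x k) (Derive_n (u k) 2 (x k)) (X k t)). fold D.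
  assert (Hbk : 0 < beta ^ k) by (apply pow_lt; exact beta_pos).
  assert (HD : D <> 0).
  { intros HD. rewrite HD, Rmult_0_r, Ropp_0, Rinv_0 in Ha. lra. }
  field. split; lra.
Qed.

Lemma foc_base k : (1 <= k <= N)%nat -> beta ^ k * Derive (u k) (x k) = p k * lam0.
Proof.
  intros Hk. unfold lam0. rewrite <- (x_base k), <- (x_base 0%nat) by lia.
  exact (demand_foc p k p_pos Hk).
Qed.

Lemma foc_change t k : 0 < t -> (1 <= k <= N)%nat ->
  beta ^ k * (Derive (u k) (X k t) - Derive (u k) (x k))
  = P t k * (lam t - lam0) + (P t k - p k) * lam0.
Proof.
  intros Ht Hk. unfold lam, lam0, X.
  rewrite Rmult_minus_distr_l, (demand_foc (P t) k (P_pos t Ht) Hk), foc_base by exact Hk.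
  unfold lam0. ring.
Qed.

Lemma budget_change t : 0 < t ->
  (X 0%nat t - x 0%nat) + sum1N N (fun k => P t k * (X k t - x k))
  = (t - p m) * (w m - x m).
Proof.
  intros Ht.
  assert (Hbud_t : X 0%nat t + sum1N N (fun k => P t k * X k t)
                   = w 0%nat + sum1N N (fun k => P t k * w k))
    by exact (demand_budget_eq (P t) (P_pos t Ht)).
  assert (Hbud_p : x 0%nat + sum1N N (fun k => p k * x k) = w 0%nat + sum1N N (fun k => p k * w k)).
  { rewrite <- x_base by lia. rewrite <- (demand_budget_eq p p_pos). f_equal.
    unfold sum1N. apply sum_n_m_ext_loc. intros k Hk. now rewrite x_base by lia. }
  assert (Hchange : forall z : nat -> R,
            sum1N N (fun k => P t k * z k) - sum1N N (fun k => p k * z k) = (t - p m) * z m).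
  { intros z. rewrite <- (sum1N_upd_price_sub N p z m t m_range). unfold sum1N.
    rewrite <- sum_n_m_minus. apply sum_n_m_ext. intros k. unfold P. simpl. ring. }
  assert (Hsplit : sum1N N (fun k => P t k * (X k t - x k))
                   = sum1N N (fun k => P t k * X k t) - sum1N N (fun k => P t k * x k)).
  { unfold sum1N. rewrite <- sum_n_m_minus. apply sum_n_m_ext. intros k. simpl. ring. }
  pose proof (Hchange w). pose proof (Hchange x). lra.
Qed.

Lemma value_change t : 0 < t ->
  sum1N N (fun k => P t k * (X k t - x k))
  = - (lam t - lam0) * S2 t - (t - p m) * (t * a m t * lam0).
Proof.
  intros Ht.
  pose proof (sum1N_upd_price_sub N p (fun k => a k t * P t k) m t m_range) as Hm.
  unfold S2, sum1N in *.
  rewrite (sum_n_m_ext_loc _ (fun k => (- (lam t - lam0)) * (a k t * P t k ^ 2)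
             + (- lam0) * ((upd_price p m t k - p k) * (a k t * P t k)))).
  - rewrite sum_n_m_lin, Hm. unfold P. rewrite upd_price_eq. ring.
  - intros k Hk. rewrite X_change, foc_change by (assumption || lia). unfold P. simpl. ring.
Qed.

Lemma lam_change t : 0 < t ->
  (lam t - lam0) * (a 0%nat t + S2 t) = (t - p m) * (x m - w m - t * a m t * lam0).
Proof.
  intros Ht.
  pose proof (budget_change t Ht) as Hbud. rewrite value_change in Hbud by exact Ht.
  rewrite X_change in Hbud by (assumption || lia). simpl in Hbud.
  change (Derive (u 0%nat) (X 0%nat t)) with (lam t) in Hbud. fold lam0 in Hbud.
  lra.
Qed.

Lemma S2_ge t : 0 < t -> a m t * t ^ 2 <= S2 t.
Proof.
  intros Ht. unfold S2, sum1N.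
  replace t with (P t m) at 2 by (unfold P; apply upd_price_eq).
  apply (sum_n_m_ge_term (fun k => a k t * P t k ^ 2)); [exact m_range|].
  intros k Hk _. apply Rmult_le_pos; [apply Rlt_le, a_pos; (assumption || lia)|].
  apply pow2_ge_0.
Qed.

Lemma X0_change_eq t : 0 < t ->
  (a 0%nat t + S2 t - a m t * t ^ 2) * (X 0%nat t - x 0%nat)
  = a 0%nat t * ((t - p m) * (w m - x m) - t * (X m t - x m)).
Proof.
  intros Ht. rewrite <- (budget_change t Ht), (value_change t Ht).
  rewrite (X_change t 0), (X_change t m), (foc_change t m) by (assumption || lia).
  unfold P. rewrite upd_price_eq. simpl. unfold lam, lam0. ring.
Qed.

(* If X_0 rises, lam falls, so by the first-order condition for good m the
   demand X_m cannot fall by more than e, and [X0_change_eq] bounds the rise of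
   X_0.  A fall of X_0 is symmetric. *)
Lemma X0_deviation_lt t e eta : 0 < t ->
  (forall y, 0 < y -> Derive (u m) y < Derive (u m) (x m) + eta -> x m - e < y) ->
  (forall y, 0 < y -> Derive (u m) (x m) - eta < Derive (u m) y -> y < x m + e) ->
  Rabs ((t - p m) * lam0) < beta ^ m * eta ->
  Rabs (X 0%nat t - x 0%nat) < Rabs ((t - p m) * (w m - x m)) + t * e.
Proof.
  intros Ht Hlo Hhi Hsmall.
  assert (Hbm : 0 < beta ^ m) by (apply pow_lt; exact beta_pos).
  assert (Ha0 : 0 < a 0%nat t) by (apply a_pos; (assumption || lia)).
  assert (HB := S2_ge t Ht).
  assert (Heq := X0_change_eq t Ht).
  assert (H0 := X_change t 0 Ht ltac:(lia)). simpl in H0.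
  change (Derive (u 0%nat) (X 0%nat t)) with (lam t) in H0. fold lam0 in H0.
  assert (Hm := foc_change t m Ht m_range).
  unfold P in Hm. rewrite upd_price_eq in Hm.
  assert (Hxm := X_pos t m Ht ltac:(lia)).
  pose proof (Rle_abs ((t - p m) * (w m - x m))) as Habs1.
  pose proof (Rabs_maj2 ((t - p m) * (w m - x m))) as Habs2.
  apply Rabs_def2 in Hsmall as [Hs1 Hs2].
  set (delta := X 0%nat t - x 0%nat) in *.
  destruct (Rle_or_lt 0 delta) as [Hd|Hd].
  - assert (Hlam : lam t - lam0 <= 0) by nra.
    assert (Hxm_lo : x m - e < X m t) by (apply Hlo; [exact Hxm|nra]).
    assert (Hle : a 0%nat t * delta <= a 0%nat t * ((t - p m) * (w m - x m) - t * (X m t - x m))).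
    { rewrite <- Heq. nra. }
    assert (Hlt : (t - p m) * (w m - x m) - t * (X m t - x m)
                  < Rabs ((t - p m) * (w m - x m)) + t * e) by nra.
    pose proof (Rmult_lt_compat_l _ _ _ Ha0 Hlt).
    rewrite Rabs_pos_eq by exact Hd.
    apply (Rmult_lt_reg_l (a 0%nat t)); [exact Ha0|]. lra.
  - assert (Hlam : 0 < lam t - lam0) by nra.
    assert (Hxm_hi : X m t < x m + e) by (apply Hhi; [exact Hxm|nra]).
    assert (Hle : a 0%nat t * ((t - p m) * (w m - x m) - t * (X m t - x m)) <= a 0%nat t * delta).
    { rewrite <- Heq. nra. }
    assert (Hlt : - ((t - p m) * (w m - x m) - t * (X m t - x m))
                  < Rabs ((t - p m) * (w m - x m)) + t * e) by nra.
    pose proof (Rmult_lt_compat_l _ _ _ Ha0 Hlt).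
    rewrite Rabs_left by exact Hd.
    apply (Rmult_lt_reg_l (a 0%nat t)); [exact Ha0|]. lra.
Qed.

Lemma continuity_pt_X0 : continuity_pt (X 0%nat) (p m).
Proof.
  apply continuity_pt_locally. intros eps.
  assert (Hpm : 0 < p m) by (apply p_pos; exact m_range).
  assert (Hbm : 0 < beta ^ m) by (apply pow_lt; exact beta_pos).
  set (e := eps / (4 * p m)).
  assert (He : 0 < e) by (apply Rdiv_lt_0_compat; [apply cond_pos|lra]).
  destruct (decreasing_inverse_bounds (Derive (u m))
              (good_utility_Derive_decreasing _ (u_good m ltac:(lia)))
              (x m) e (x_pos m ltac:(lia)) He) as [eta [Heta [Hlo Hhi]]].
  assert (Hnear : locally (p m) (fun t => (0 < t < 2 * p m)
            /\ Rabs ((t - p m) * (w m - x m)) < eps / 2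
            /\ Rabs ((t - p m) * lam0) < beta ^ m * eta)).
  { apply filter_and; [|apply filter_and].
    - apply (locally_interval _ _ 0 (2 * p m)); simpl; try lra. tauto.
    - apply locally_Rabs_lin. pose proof (cond_pos eps). lra.
    - apply locally_Rabs_lin. nra. }
  refine (filter_imp _ _ _ Hnear). intros t [[Ht1 Ht2] [Hw Hl]].
  rewrite X_base by lia.
  pose proof (X0_deviation_lt t e eta Ht1 Hlo Hhi Hl).
  assert (t * e <= eps / 2).
  { apply Rle_trans with (2 * p m * e); [apply Rmult_le_compat_r; lra|].
    right. unfold e. field. lra. }
  lra.
Qed.

Lemma continuity_pt_lam : continuity_pt lam (p m).
Proof.
  apply (continuity_pt_comp (X 0%nat) (Derive (u 0%nat))); [exact continuity_pt_X0|].
  rewrite X_base by lia.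
  apply continuity_pt_good_utility_Derive; [apply u_good|apply x_pos]; lia.
Qed.

Lemma continuity_pt_X k : (k <= N)%nat -> continuity_pt (X k) (p m).
Proof.
  intros Hk. destruct (Nat.eq_dec k 0) as [->|Hk0]; [exact continuity_pt_X0|].
  apply (continuity_pt_of_decreasing_comp (Derive (u k))).
  - apply good_utility_Derive_decreasing, u_good, Hk.
  - apply X_pos; [apply p_pos; exact m_range|exact Hk].
  - refine (filter_imp _ _ _ locally_pos_price). intros t Ht. apply X_pos; assumption.
  - assert (Hbk : 0 < beta ^ k) by (apply pow_lt; exact beta_pos).
    apply (continuity_pt_ext_loc (fun t => P t k * lam t / beta ^ k)).
    + refine (filter_imp _ _ _ locally_pos_price). intros t Ht.
      unfold lam, X. rewrite <- (demand_foc (P t) k (P_pos t Ht)) by lia. field. lra.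
    + apply continuity_pt_div; [apply continuity_pt_mult| |lra].
      * apply continuity_pt_upd_price.
      * exact continuity_pt_lam.
      * apply continuity_pt_const. intros ? ?; reflexivity.
Qed.

Lemma continuity_pt_a k : (k <= N)%nat -> continuity_pt (a k) (p m).
Proof.
  intros Hk. unfold a.
  assert (Hbk : 0 < beta ^ k) by (apply pow_lt; exact beta_pos).
  assert (Hneg := good_utility_Derive_n2_neg _ (u_good k Hk) (x k) (x_pos k Hk)).
  apply continuity_pt_inv.
  - apply continuity_pt_opp, continuity_pt_mult.
    + apply continuity_pt_const. intros ? ?; reflexivity.
    + apply (continuity_pt_comp (X k)); [exact (continuity_pt_X k Hk)|].
      rewrite X_base by exact Hk. apply continuity_pt_slope.
      apply good_utility_is_derive_Derive; [apply u_good|apply x_pos]; exact Hk.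
  - rewrite X_base, slope_at by exact Hk. nra.
Qed.

Lemma a0_S2_pos t : 0 < t -> 0 < a 0%nat t + S2 t.
Proof.
  intros Ht. pose proof (S2_ge t Ht). pose proof (a_pos t m Ht ltac:(lia)).
  pose proof (a_pos t 0 Ht ltac:(lia)). nra.
Qed.

Let G (n : nat) (t : R) : R :=
  - a n t * (P t n * (x m - w m - t * a m t * lam0) / (a 0%nat t + S2 t)
             + (if Nat.eqb n m then lam0 else 0)).

Lemma X_slope n t : (1 <= n <= N)%nat -> 0 < t -> X n t - x n = G n t * (t - p m).
Proof.
  intros Hn Ht. pose proof (a0_S2_pos t Ht) as HA.
  assert (Hlam : lam t - lam0
                 = (t - p m) * (x m - w m - t * a m t * lam0) / (a 0%nat t + S2 t)).
  { rewrite <- (lam_change t Ht). field. lra. }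
  rewrite X_change, foc_change, Hlam by (assumption || lia).
  unfold G, P. rewrite upd_price_sub. destruct (Nat.eqb n m); field; lra.
Qed.

Lemma continuity_pt_G n : (1 <= n <= N)%nat -> continuity_pt (G n) (p m).
Proof.
  intros Hn.
  assert (Hconst : forall c, continuity_pt (fun _ => c) (p m))
    by (intros c; apply continuity_pt_const; intros ? ?; reflexivity).
  assert (HS2 : continuity_pt S2 (p m)).
  { apply continuity_pt_sum_n_m. intros k Hk.
    apply continuity_pt_mult; [apply continuity_pt_a; lia|].
    apply continuity_pt_mult; [apply continuity_pt_upd_price|].
    apply continuity_pt_mult; [apply continuity_pt_upd_price|apply Hconst]. }
  apply continuity_pt_mult; [apply continuity_pt_opp, continuity_pt_a; lia|].
  apply continuity_pt_plus; [|apply Hconst].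
  apply continuity_pt_div.
  - apply continuity_pt_mult; [apply continuity_pt_upd_price|].
    apply continuity_pt_minus; [apply Hconst|].
    apply continuity_pt_mult; [|apply Hconst].
    apply continuity_pt_mult; [apply continuity_pt_id|apply continuity_pt_a; lia].
  - apply continuity_pt_plus; [apply continuity_pt_a; lia|exact HS2].
  - pose proof (a0_S2_pos (p m) (p_pos m m_range)). lra.
Qed.

Lemma a_base k : (k <= N)%nat ->
  a k (p m) * (beta ^ k * Derive (u k) (x k)) = rr (u k) (x k).
Proof.
  intros Hk. unfold a, rr. rewrite X_base, slope_at by exact Hk.
  assert (Hbk : 0 < beta ^ k) by (apply pow_lt; exact beta_pos).
  pose proof (good_utility_Derive_n2_neg _ (u_good k Hk) (x k) (x_pos k Hk)).
  field. split; nra.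
Qed.

Lemma G_base n : (1 <= n <= N)%nat ->
  let r := fun k => rr (u k) (x k) in
  let ri := r 0%nat + sum1N N (fun k => p k * r k) in
  G n (p m) = (r m * r n / ri - (if Nat.eqb m n then r n / p n else 0))
              + r n / ri * (w m - x m).
Proof.
  intros Hn r ri.
  pose proof lam0_pos as Hlam0.
  assert (Hak : forall k, (1 <= k <= N)%nat -> a k (p m) = r k / (p k * lam0)).
  { intros k Hk. pose proof (p_pos k Hk). unfold r.
    rewrite <- a_base, foc_base by lia. field. lra. }
  assert (Ha0 : a 0%nat (p m) = r 0%nat / lam0).
  { unfold r. rewrite <- a_base by lia. simpl. fold lam0. field. lra. }
  assert (HP : forall k, P (p m) k = p k) by (intros k; unfold P; now rewrite upd_price_id).
  assert (HS2 : S2 (p m) = (ri - r 0%nat) / lam0).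
  { unfold S2, ri, sum1N.
    rewrite (sum_n_m_ext_loc _ (fun k => / lam0 * (p k * r k))).
    - assert (Hscal : sum_n_m (fun k => / lam0 * (p k * r k)) 1 N
                      = / lam0 * sum_n_m (fun k => p k * r k) 1 N :> R)
        by exact (sum_n_m_mult_l _ _ 1 N).
      rewrite Hscal. field. lra.
    - intros k Hk. simpl. rewrite HP, Hak by exact Hk. pose proof (p_pos k Hk). field. lra. }
  assert (Hri : 0 < ri).
  { pose proof (a0_S2_pos (p m) (p_pos m m_range)) as HA. rewrite Ha0, HS2 in HA.
    replace (r 0%nat / lam0 + (ri - r 0%nat) / lam0) with (ri / lam0) in HA by (field; lra).
    apply Rdiv_pos_cases in HA. lra. }
  pose proof (p_pos n Hn). pose proof (p_pos m m_range).
  unfold G. rewrite HP, Hak, Hak, Ha0, HS2 by assumption. rewrite Nat.eqb_sym.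
  destruct (Nat.eqb m n); field; repeat split; lra.
Qed.

Theorem is_derive_demand n : (1 <= n <= N)%nat ->
  let r := fun k => rr (u k) (x k) in
  let ri := r 0%nat + sum1N N (fun k => p k * r k) in
  is_derive (fun t => xi (upd_price p m t) n) (p m)
    ((r m * r n / ri - (if Nat.eqb m n then r n / p n else 0)) + r n / ri * (w m - x m)).
Proof.
  intros Hn. cbv zeta beta. rewrite <- (G_base n Hn).
  apply (is_derive_of_slope (X n)); [|exact (continuity_pt_G n Hn)].
  refine (filter_imp _ _ _ locally_pos_price). intros t Ht.
  rewrite X_base by lia. exact (X_slope n t Hn Ht).
Qed.

End PriceChange.
End Consumer.

Theorem lemma2 (N nI : nat) (beta : R)
  (u : nat -> nat -> R -> R) (omega : nat -> nat -> R)
  (xi : nat -> (nat -> R) -> (nat -> R))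
  (pbar : nat -> R) (xbar : nat -> nat -> R) :
  0 < beta < 1 ->
  (forall i n, (i < nI)%nat -> (n <= N)%nat -> 0 <= omega i n) ->
  (forall i n, (i < nI)%nat -> (n <= N)%nat -> good_period_utility (u i n)) ->
  (forall i, (i < nI)%nat -> is_demand N beta (u i) (omega i) (xi i)) ->
  competitive_equilibrium N nI omega xi pbar xbar ->
  forall i m n, (i < nI)%nat -> (1 <= m <= N)%nat -> (1 <= n <= N)%nat ->
    let r := fun k => rr (u i k) (xbar i k) in
    let ri := r 0%nat + sum1N N (fun k => pbar k * r k) in
    is_derive (fun t => xi i (upd_price pbar m t) n) (pbar m)
      ((r m * r n / ri - (if Nat.eqb m n then r n / pbar n else 0))
       + r n / ri * (omega i m - xbar i m)).
Proof.
  intros Hbeta _ Hu Hxi [Hpbar [Hxbar _]] i m n Hi Hm Hn.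
  apply (is_derive_demand N beta (u i) (omega i) (xi i)); try assumption.
  - lra.
  - intros k Hk. now apply Hu.
  - now apply Hxi.
  - intros k Hk. symmetry. now apply Hxbar.
Qed.
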